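(* Let $\Gamma\subset\mathbb S^2$ be half of a great circle joining the north pole $e_3$ and the south pole $-e_3$, and for $r>0$ let $S=\overline{\bigcup_{x\in\Gamma}B(x,r)}$ (metric balls of the round metric). There is $r_0>0$ such that for every $r\in(0,r_0)$, the round sphere $\mathbb S^2$ with measurement set $S$ is $\mathrm{FLIE}_\varepsilon$ for $\varepsilon=r$, but it is not $\mathrm{FLIE}_\varepsilon$ for every $\varepsilon>0$.
   Context: $\mathbb S^2$ carries the round distance. For compact length space $(X,d)$ and closed $S\subset X$, $\mathcal R_{X,S}(p)(z)=d(p,z)$, $z\in S$; $(X,d)$ with $S$ is $\mathrm{FLIE}_\varepsilon$ if $\mathcal R_{X,S}\colon(X,d)\to(C(S),\|\cdot\|_\infty)$ is a topological embedding and $\|\mathcal R_{X,S}(p)-\mathcal R_{X,S}(q)\|_\infty=d(p,q)$ whenever $d(p,q)<\varepsilon$. *)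

From Stdlib Require Import Reals.
From Coquelicot Require Import Coquelicot.
Open Scope R_scope.

Definition pt : Type := (R * R * R)%type.

Definition dot (p q : pt) : R :=
  let '(a, b, c) := p in let '(x, y, z) := q in a * x + b * y + c * z.

Definition vadd (p q : pt) : pt :=
  let '(a, b, c) := p in let '(x, y, z) := q in (a + x, b + y, c + z).

Definition vscale (t : R) (p : pt) : pt :=
  let '(a, b, c) := p in (t * a, t * b, t * c).

Definition on_sphere (p : pt) : Prop := dot p p = 1.
Definition sdist (p q : pt) : R := acos (dot p q).

Definition e3 : pt := (0, 0, 1).

Definition half_gc (u : pt) (x : pt) : Prop :=
  exists t, 0 <= t <= PI /\ x = vadd (vscale (cos t) e3) (vscale (sin t) u).

(* S = closure (in S^2) of the union of the open metric balls B(x,r), x in Gamma. *)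
Definition meas_set (u : pt) (r : R) (p : pt) : Prop :=
  on_sphere p /\
  forall delta, 0 < delta ->
    exists q, on_sphere q /\ sdist p q < delta /\
      exists x, half_gc u x /\ sdist q x < r.

(* || R_{X,S}(p) - R_{X,S}(q) ||_infty = sup_{z in S} |d(p,z) - d(q,z)| *)
Definition supdist (S : pt -> Prop) (p q : pt) : R :=
  real (Lub_Rbar (fun v => exists z, S z /\ v = Rabs (sdist p z - sdist q z))).

(* FLIE_eps for (S^2, round distance) with measurement set S:
   R_{X,S} is a topological embedding into (C(S), sup norm)
   (injective, continuous, with continuous inverse on its image), and it is
   isometric on pairs at distance < eps. *)
Definition FLIE (S : pt -> Prop) (eps : R) : Prop :=
  (forall p q, on_sphere p -> on_sphere q ->
     (forall z, S z -> sdist p z = sdist q z) -> p = q) /\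
  (forall p, on_sphere p -> forall eta, 0 < eta -> exists delta, 0 < delta /\
     forall q, on_sphere q -> sdist p q < delta -> supdist S p q < eta) /\
  (forall p, on_sphere p -> forall eta, 0 < eta -> exists delta, 0 < delta /\
     forall q, on_sphere q -> supdist S p q < delta -> sdist p q < eta) /\
  (forall p q, on_sphere p -> on_sphere q -> sdist p q < eps ->
     supdist S p q = sdist p q).

From Stdlib Require Import Reals Lra Psatz.
From Coquelicot Require Import Coquelicot.
Open Scope R_scope.

(* The measurement map is 1-Lipschitz by the spherical triangle inequality.  The set S
   contains [e3], [u] and a point at distance [r/2] from [e3] off the plane of Gamma; these
   three directions span R^3, so closeness of the distance profiles of [p] and [q] on S
   forces closeness of [p] and [q], which gives injectivity and a continuous inverse.
   If d(p,q) < r, the great circle through [p] and [q] meets Gamma at some [Y]; following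
   that circle, a point of S near [Y] ([Y] itself, [q] or [-p]) lies on the prolongation of
   the arc from [p] to [q] and sees them at distances differing by exactly d(p,q).
   Finally, the poles [n] and [-n] of the great circle containing Gamma are at distance
   [PI], but every point of S is within [r] of their equator, so S separates them by at
   most [2 r] and the map is not isometric at scale [PI]. *)

Lemma dot_comm p q : dot p q = dot q p.
Proof. destruct p as [[? ?] ?], q as [[? ?] ?]; simpl; ring. Qed.

Lemma dot_vadd_l p q z : dot (vadd p q) z = dot p z + dot q z.
Proof. destruct p as [[? ?] ?], q as [[? ?] ?], z as [[? ?] ?]; simpl; ring. Qed.

Lemma dot_vadd_r p q z : dot p (vadd q z) = dot p q + dot p z.
Proof. destruct p as [[? ?] ?], q as [[? ?] ?], z as [[? ?] ?]; simpl; ring. Qed.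

Lemma dot_vscale_l t p q : dot (vscale t p) q = t * dot p q.
Proof. destruct p as [[? ?] ?], q as [[? ?] ?]; simpl; ring. Qed.

Lemma dot_vscale_r t p q : dot p (vscale t q) = t * dot p q.
Proof. destruct p as [[? ?] ?], q as [[? ?] ?]; simpl; ring. Qed.

Ltac dot_simpl :=
  repeat first [ rewrite dot_vadd_l | rewrite dot_vadd_r
               | rewrite dot_vscale_l | rewrite dot_vscale_r ].

Lemma dot_sphere_bound p q : on_sphere p -> on_sphere q -> -1 <= dot p q <= 1.
Proof.
  destruct p as [[p1 p2] p3], q as [[q1 q2] q3]; unfold on_sphere; simpl; intros Hp Hq.
  assert (Lagrange : (p1*p1 + p2*p2 + p3*p3) * (q1*q1 + q2*q2 + q3*q3)
    - (p1*q1 + p2*q2 + p3*q3)^2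
    = (p1*q2 - p2*q1)^2 + (p1*q3 - p3*q1)^2 + (p2*q3 - p3*q2)^2) by ring.
  rewrite Hp, Hq in Lagrange.
  pose proof (pow2_ge_0 (p1*q2 - p2*q1)); pose proof (pow2_ge_0 (p1*q3 - p3*q1));
  pose proof (pow2_ge_0 (p2*q3 - p3*q2)).
  nra.
Qed.

Lemma antipode_sphere p : on_sphere p -> on_sphere (vscale (-1) p).
Proof. unfold on_sphere; intros Hp; dot_simpl; rewrite Hp; ring. Qed.

Lemma sphere_eq_of_dot_ge_1 p q : on_sphere p -> on_sphere q -> 1 <= dot p q -> p = q.
Proof.
  destruct p as [[p1 p2] p3], q as [[q1 q2] q3]; unfold on_sphere; simpl; intros Hp Hq H.
  assert (Hd : (p1 - q1)^2 + (p2 - q2)^2 + (p3 - q3)^2 <= 0) by nra.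
  pose proof (pow2_ge_0 (p1 - q1)); pose proof (pow2_ge_0 (p2 - q2));
  pose proof (pow2_ge_0 (p3 - q3)).
  repeat f_equal; nra.
Qed.

Lemma acos_antitone x y : -1 <= x -> x <= y -> y <= 1 -> acos y <= acos x.
Proof.
  intros Hx Hxy Hy. apply Rnot_lt_le; intro H.
  pose proof (acos_bound x); pose proof (acos_bound y).
  assert (Hcos : cos (acos y) < cos (acos x)) by (apply cos_decreasing_1; lra).
  rewrite !cos_acos in Hcos by lra. lra.
Qed.

Lemma acos_lt_acos x y : -1 <= x -> x < y -> y <= 1 -> acos y < acos x.
Proof.
  intros Hx Hxy Hy. destruct (acos_antitone x y Hx (Rlt_le _ _ Hxy) Hy) as [H|H]; auto.
  apply (f_equal cos) in H. rewrite !cos_acos in H by lra. lra.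
Qed.

Lemma acos_m1 : acos (-1) = PI.
Proof. replace (-1) with (- (1)) by ring. rewrite acos_opp, acos_1. ring. Qed.

Lemma sdist_bound p q : 0 <= sdist p q <= PI.
Proof. apply acos_bound. Qed.

Lemma sdist_comm p q : sdist p q = sdist q p.
Proof. unfold sdist; now rewrite dot_comm. Qed.

Lemma sdist_refl p : on_sphere p -> sdist p p = 0.
Proof. intros Hp; unfold sdist; rewrite Hp; apply acos_1. Qed.

Lemma cos_sdist p q : on_sphere p -> on_sphere q -> cos (sdist p q) = dot p q.
Proof. intros; apply cos_acos, dot_sphere_bound; auto. Qed.

(* Nonnegativity of the Gram determinant of [p], [q], [z]. *)
Lemma gram_ineq p q z : on_sphere p -> on_sphere q -> on_sphere z ->
  (dot p z - dot p q * dot q z)^2 <= (1 - (dot p q)^2) * (1 - (dot q z)^2).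
Proof.
  destruct p as [[p1 p2] p3], q as [[q1 q2] q3], z as [[z1 z2] z3];
  unfold on_sphere; simpl; intros Hp Hq Hz.
  set (a := p1*q1 + p2*q2 + p3*q3); set (b := q1*z1 + q2*z2 + q3*z3);
  set (c := p1*z1 + p2*z2 + p3*z3).
  assert (Gram : (p1*p1 + p2*p2 + p3*p3) * (q1*q1 + q2*q2 + q3*q3) * (z1*z1 + z2*z2 + z3*z3)
     + 2*a*b*c - (p1*p1 + p2*p2 + p3*p3)*b^2 - (q1*q1 + q2*q2 + q3*q3)*c^2
     - (z1*z1 + z2*z2 + z3*z3)*a^2
     = (p1*(q2*z3 - q3*z2) - p2*(q1*z3 - q3*z1) + p3*(q1*z2 - q2*z1))^2)
    by (unfold a, b, c; ring).
  rewrite Hp, Hq, Hz in Gram.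
  pose proof (pow2_ge_0 (p1*(q2*z3 - q3*z2) - p2*(q1*z3 - q3*z1) + p3*(q1*z2 - q2*z1))).
  nra.
Qed.

Lemma sdist_triangle p q z : on_sphere p -> on_sphere q -> on_sphere z ->
  sdist p z <= sdist p q + sdist q z.
Proof.
  intros Hp Hq Hz.
  pose proof (sdist_bound p q); pose proof (sdist_bound q z); pose proof (sdist_bound p z).
  destruct (Rle_or_lt PI (sdist p q + sdist q z)) as [Hbig|Hsmall]; [lra|].
  assert (Hcos : cos (sdist p q + sdist q z) <= dot p z).
  { pose proof (gram_ineq p q z Hp Hq Hz) as G.
    rewrite <- (cos_sdist p q), <- (cos_sdist q z) in G by auto.
    rewrite cos_plus.
    set (A := sdist p q) in *; set (B := sdist q z) in *.
    pose proof (sin_ge_0 A); pose proof (sin_ge_0 B).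
    assert (E : (1 - cos A ^ 2) * (1 - cos B ^ 2) = (sin A * sin B) ^ 2).
    { pose proof (sin2_cos2 A); pose proof (sin2_cos2 B); unfold Rsqr in *; nra. }
    rewrite E in G. assert (0 <= sin A * sin B) by nra. nra. }
  unfold sdist at 1.
  rewrite <- (acos_cos (sdist p q + sdist q z)) by lra.
  apply acos_antitone; try lra; [apply COS_bound | apply dot_sphere_bound; auto].
Qed.

Lemma Rabs_sdist_sub_le p q z : on_sphere p -> on_sphere q -> on_sphere z ->
  Rabs (sdist p z - sdist q z) <= sdist p q.
Proof.
  intros Hp Hq Hz.
  pose proof (sdist_triangle p q z Hp Hq Hz); pose proof (sdist_triangle q p z Hq Hp Hz).
  rewrite (sdist_comm q p) in *. apply Rabs_le; lra.
Qed.

Lemma cos_lipschitz x y : Rabs (cos x - cos y) <= Rabs (x - y).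
Proof.
  destruct (MVT_abs cos (fun c => - sin c) y x) as [c [E _]].
  { intros c _; apply derivable_pt_lim_cos. }
  rewrite E, Rabs_Ropp.
  assert (Rabs (sin c) <= 1) by (pose proof (SIN_bound c); apply Rabs_le; lra).
  pose proof (Rabs_pos (x - y)); nra.
Qed.

Lemma Rabs_dot_sub_le p q z : on_sphere p -> on_sphere q -> on_sphere z ->
  Rabs (dot p z - dot q z) <= Rabs (sdist p z - sdist q z).
Proof. intros; rewrite <- !cos_sdist by auto; apply cos_lipschitz. Qed.

(* [0 <= M] covers an empty [E], where [Lub_Rbar E = m_infty] and [real] returns 0. *)
Lemma real_Lub_Rbar_le (E : R -> Prop) M : 0 <= M -> (forall v, E v -> v <= M) ->
  real (Lub_Rbar E) <= M.
Proof.
  intros HM HE. destruct (Lub_Rbar_correct E) as [_ Hlub].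
  specialize (Hlub M HE).
  destruct (Lub_Rbar E); simpl in *; auto; contradiction.
Qed.

Lemma le_real_Lub_Rbar (E : R -> Prop) M v : (forall w, E w -> w <= M) -> E v ->
  v <= real (Lub_Rbar E).
Proof.
  intros HE Hv. destruct (Lub_Rbar_correct E) as [Hub Hlub].
  specialize (Hlub M HE). specialize (Hub v Hv).
  destruct (Lub_Rbar E); simpl in *; auto; contradiction.
Qed.

Section Supdist.

Variable S : pt -> Prop.
Hypothesis S_sphere : forall z, S z -> on_sphere z.

Lemma supdist_le_sdist p q : on_sphere p -> on_sphere q -> supdist S p q <= sdist p q.
Proof.
  intros Hp Hq. apply real_Lub_Rbar_le; [apply sdist_bound|].
  intros v [z [Hz ->]]. apply Rabs_sdist_sub_le; auto.
Qed.

Lemma Rabs_sdist_sub_le_supdist p q z : on_sphere p -> on_sphere q -> S z ->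
  Rabs (sdist p z - sdist q z) <= supdist S p q.
Proof.
  intros Hp Hq Hz. apply (le_real_Lub_Rbar _ (sdist p q)); [|now exists z].
  intros v [z' [Hz' ->]]. apply Rabs_sdist_sub_le; auto.
Qed.

Lemma Rabs_dot_sub_le_supdist p q z : on_sphere p -> on_sphere q -> S z ->
  Rabs (dot p z - dot q z) <= supdist S p q.
Proof.
  intros Hp Hq Hz. eapply Rle_trans; [apply Rabs_dot_sub_le; auto|].
  apply Rabs_sdist_sub_le_supdist; auto.
Qed.

End Supdist.

Definition circ (q w : pt) (t : R) : pt := vadd (vscale (cos t) q) (vscale (sin t) w).

Lemma circ_0 q w : circ q w 0 = q.
Proof.
  unfold circ; rewrite cos_0, sin_0.
  destruct q as [[? ?] ?], w as [[? ?] ?]; simpl; repeat f_equal; ring.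
Qed.

Section Circle.

Variables q w : pt.
Hypotheses (Hq : on_sphere q) (Hw : on_sphere w) (Hqw : dot q w = 0).

Lemma dot_circ a b : dot (circ q w a) (circ q w b) = cos (b - a).
Proof.
  unfold circ; dot_simpl. rewrite (dot_comm w q), Hqw, Hq, Hw, cos_minus. ring.
Qed.

Lemma circ_sphere t : on_sphere (circ q w t).
Proof. unfold on_sphere; rewrite dot_circ, Rminus_diag; apply cos_0. Qed.

Lemma sdist_circ a b : Rabs (a - b) <= PI -> sdist (circ q w a) (circ q w b) = Rabs (a - b).
Proof.
  intros H. unfold sdist; rewrite dot_circ.
  replace (cos (b - a)) with (cos (Rabs (a - b))).
  - apply acos_cos; split; [apply Rabs_pos | auto].
  - unfold Rabs; destruct (Rcase_abs (a - b)); [|rewrite <- cos_neg]; f_equal; ring.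
Qed.

End Circle.

Lemma great_circle_through p q : on_sphere p -> on_sphere q -> -1 < dot p q < 1 ->
  exists w, on_sphere w /\ dot q w = 0 /\ p = circ q w (sdist p q).
Proof.
  intros Hp Hq Ha. unfold on_sphere in Hp, Hq.
  assert (Hd : 0 < sdist p q < PI) by (apply acos_bound_lt; auto).
  set (d := sdist p q) in *.
  assert (Hcos : cos d = dot p q) by (apply cos_sdist; auto).
  assert (Hs : 0 < sin d) by (apply sin_gt_0; lra).
  assert (Hss : sin d * sin d = 1 - dot p q * dot p q)
    by (pose proof (sin2_cos2 d); unfold Rsqr in *; rewrite <- Hcos; lra).
  exists (vscale (/ sin d) (vadd p (vscale (- cos d) q))).
  split; [|split].
  - unfold on_sphere; dot_simpl.
    rewrite Hp, Hq, (dot_comm q p), Hcos.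
    replace (1 + - dot p q * dot p q) with (sin d * sin d) by lra. field. lra.
  - dot_simpl. rewrite Hq, (dot_comm q p), Hcos. field. lra.
  - unfold circ. destruct p as [[? ?] ?], q as [[? ?] ?]; simpl.
    repeat f_equal; field; lra.
Qed.

Lemma meas_set_sphere u r z : meas_set u r z -> on_sphere z.
Proof. now intros [Hz _]. Qed.

Lemma meas_set_of_near u r z x : on_sphere z -> half_gc u x -> sdist z x < r ->
  meas_set u r z.
Proof.
  intros Hz Hx Hzx. split; auto. intros delta Hdelta.
  exists z; repeat split; auto. rewrite sdist_refl; auto. now exists x.
Qed.

Lemma unit_circle_angle x y : x * x + y * y = 1 ->
  exists t, -PI <= t <= PI /\ x = cos t /\ y = sin t.
Proof.
  intros H.
  assert (Hsin : sqrt (1 - x²) = Rabs y).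
  { replace (1 - x²) with (Rsqr (Rabs y)) by (rewrite <- Rsqr_abs; unfold Rsqr; lra).
    apply sqrt_Rsqr, Rabs_pos. }
  assert (Hx : -1 <= x <= 1) by nra.
  pose proof (acos_bound x). pose proof PI_RGT_0.
  destruct (Rle_or_lt 0 y) as [Hy|Hy].
  - exists (acos x). rewrite cos_acos, sin_acos, Hsin, Rabs_right by lra. repeat split; lra.
  - exists (- acos x). rewrite cos_neg, sin_neg, cos_acos, sin_acos, Hsin, Rabs_left by lra.
    repeat split; lra.
Qed.

Lemma exists_unit_orthogonal a b : exists x y, x * x + y * y = 1 /\ a * x + b * y = 0.
Proof.
  destruct (Req_dec (a * a + b * b) 0) as [E|E].
  - exists 1, 0. split; [ring|]. assert (a = 0) by nra. subst a. ring.
  - assert (Hn : 0 < sqrt (a * a + b * b)) by (apply sqrt_lt_R0; nra).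
    assert (Hnn : sqrt (a * a + b * b) * sqrt (a * a + b * b) = a * a + b * b)
      by (apply sqrt_sqrt; nra).
    set (N := sqrt (a * a + b * b)) in *.
    exists (b / N), (- a / N). split; [|field; lra].
    replace (b / N * (b / N) + - a / N * (- a / N)) with ((a * a + b * b) / (N * N))
      by (field; lra).
    rewrite Hnn. field. lra.
Qed.

(* Angles along a great circle: [q], [p] and a point [Y] of Gamma sit at [0], [d] and
   [th]; a point at angle [t] within [r] of [Y] sees [p] and [q] at distances differing
   by exactly [d]. *)
Lemma angle_witness d r th : 0 <= d < r -> r <= PI / 2 -> -PI <= th <= PI ->
  exists t, Rabs (t - th) < r /\ Rabs (0 - t) <= PI /\ Rabs (d - t) <= PI /\
    Rabs (Rabs (d - t) - Rabs (0 - t)) = d.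
Proof.
  intros Hd Hr Hth. pose proof PI_RGT_0.
  assert (Ht : exists t, t = th /\ d <= th \/ t = th /\ d - PI <= th <= 0
                 \/ t = d - PI /\ th < d - PI \/ t = 0 /\ 0 < th < d)
    by (destruct (Rle_or_lt d th); [exists th; lra|];
        destruct (Rle_or_lt th 0); [|exists 0; lra];
        destruct (Rle_or_lt (d - PI) th); [exists th | exists (d - PI)]; lra).
  destruct Ht as [t Ht]. exists t.
  repeat split; unfold Rabs; repeat case Rcase_abs; intros; lra.
Qed.

Section HalfGreatCircle.

Variables u1 u2 : R.
Hypothesis Hu : u1 * u1 + u2 * u2 = 1.

Let u : pt := (u1, u2, 0).
Let n : pt := (- u2, u1, 0).

Lemma pole_sphere : on_sphere n.
Proof. unfold on_sphere, n; simpl; lra. Qed.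

Lemma half_gc_sphere x : half_gc u x -> on_sphere x.
Proof.
  intros [t [_ ->]]. unfold on_sphere, u, e3; simpl.
  pose proof (sin2_cos2 t). unfold Rsqr in *. nra.
Qed.

Lemma dot_pole_half_gc x : half_gc u x -> dot n x = 0.
Proof. intros [t [_ ->]]. unfold n, u, e3; simpl; ring. Qed.

Lemma half_gc_of_equator y : on_sphere y -> dot n y = 0 -> 0 <= dot u y -> half_gc u y.
Proof.
  unfold on_sphere, n, u. destruct y as [[y1 y2] y3]; simpl. intros Hy Hn Hk.
  set (k := u1 * y1 + u2 * y2 + 0 * y3) in *.
  assert (E1 : y1 = k * u1).
  { transitivity (k * u1 - u2 * (- u2 * y1 + u1 * y2 + 0 * y3)); [|rewrite Hn; ring].
    unfold k; transitivity (y1 * (u1 * u1 + u2 * u2)); [rewrite Hu|]; ring. }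
  assert (E2 : y2 = k * u2).
  { transitivity (k * u2 + u1 * (- u2 * y1 + u1 * y2 + 0 * y3)); [|rewrite Hn; ring].
    unfold k; transitivity (y2 * (u1 * u1 + u2 * u2)); [rewrite Hu|]; ring. }
  assert (Hk2 : k * k = 1 - y3 * y3) by (rewrite E1, E2 in Hy; nra).
  assert (Hy3 : -1 <= y3 <= 1) by nra.
  exists (acos y3). split; [apply acos_bound|].
  assert (Hsin : sin (acos y3) = k).
  { rewrite sin_acos by lra. unfold Rsqr. rewrite <- Hk2. apply sqrt_Rsqr; auto. }
  unfold e3; simpl. rewrite Hsin, cos_acos by lra.
  rewrite E1, E2 at 1. f_equal; [f_equal|]; ring.
Qed.

Lemma e3_half_gc : half_gc u e3.
Proof.
  exists 0. pose proof PI_RGT_0. split; [lra|].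
  rewrite cos_0, sin_0. unfold u, e3; simpl. repeat f_equal; ring.
Qed.

Lemma u_half_gc : half_gc u u.
Proof.
  exists (PI / 2). pose proof PI_RGT_0. split; [lra|].
  rewrite cos_PI2, sin_PI2. unfold u, e3; simpl. repeat f_equal; ring.
Qed.

Lemma great_circle_meets_half_gc q w : on_sphere q -> on_sphere w -> dot q w = 0 ->
  exists th, -PI <= th <= PI /\ half_gc u (circ q w th).
Proof.
  intros Hq Hw Hqw.
  assert (Hxy : exists x y, x * x + y * y = 1 /\ x * dot n q + y * dot n w = 0
                            /\ 0 <= x * dot u q + y * dot u w).
  { destruct (exists_unit_orthogonal (dot n q) (dot n w)) as [x [y [Hxy Hn]]].
    destruct (Rle_or_lt 0 (x * dot u q + y * dot u w));
      [exists x, y | exists (- x), (- y)]; repeat split; lra. }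
  destruct Hxy as [x [y [Hxy [Hn Hpos]]]].
  destruct (unit_circle_angle x y Hxy) as [th [Hth [-> ->]]].
  exists th. split; auto.
  apply half_gc_of_equator; [apply circ_sphere; auto | unfold circ; dot_simpl; lra..].
Qed.

Definition anchor (s : R) : pt := circ e3 n s.

Lemma anchor_meas_set r : 0 < r < PI -> meas_set u r (anchor (r / 2)).
Proof.
  intros Hr. assert (He : on_sphere e3) by (apply half_gc_sphere, e3_half_gc).
  assert (Hen : dot e3 n = 0) by (unfold n, e3; simpl; ring).
  unfold anchor; apply (meas_set_of_near u r _ e3);
    [apply circ_sphere; auto using pole_sphere | apply e3_half_gc|].
  pose proof (sdist_circ e3 n He pole_sphere Hen (r / 2) 0) as E. rewrite circ_0 in E.
  rewrite E; rewrite Rminus_0_r, Rabs_right; lra.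
Qed.

Lemma dot_frame d : dot d d = (dot d u) ^ 2 + (dot d n) ^ 2 + (dot d e3) ^ 2.
Proof.
  destruct d as [[d1 d2] d3]; unfold u, n, e3; simpl.
  transitivity ((u1 * u1 + u2 * u2) * (d1 * d1 + d2 * d2) + d3 * d3); [rewrite Hu|]; ring.
Qed.

Lemma anchor_bound s d delta :
  Rabs (dot d e3) <= delta -> Rabs (dot d u) <= delta -> Rabs (dot d (anchor s)) <= delta ->
  (sin s) ^ 2 * dot d d <= 6 * delta ^ 2.
Proof.
  intros Hde Hdu Hda.
  assert (Ha : dot d (anchor s) = cos s * dot d e3 + sin s * dot d n)
    by (unfold anchor, circ; dot_simpl; ring).
  rewrite Ha in Hda. rewrite dot_frame.
  set (A := dot d u) in *; set (N := dot d n) in *; set (E := dot d e3) in *.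
  pose proof (SIN_bound s); pose proof (COS_bound s).
  assert (Hsin2 : 0 <= sin s ^ 2 <= 1) by nra.
  assert (HN : Rabs (sin s * N) <= 2 * delta).
  { replace (sin s * N) with ((cos s * E + sin s * N) - cos s * E) by ring.
    eapply Rle_trans; [apply Rabs_triang|]. rewrite Rabs_Ropp, Rabs_mult.
    assert (Rabs (cos s) <= 1) by (apply Rabs_le; lra).
    pose proof (Rabs_pos E); nra. }
  apply Rabs_le_between in Hde, Hdu, HN.
  assert (A ^ 2 <= delta ^ 2) by nra.
  assert (E ^ 2 <= delta ^ 2) by nra.
  assert ((sin s * N) ^ 2 <= 4 * delta ^ 2) by nra.
  nra.
Qed.

Lemma half_gc_meas_set r x : 0 < r -> half_gc u x -> meas_set u r x.
Proof.
  intros Hr Hx. apply (meas_set_of_near u r x x); auto using half_gc_sphere.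
  rewrite sdist_refl; auto using half_gc_sphere.
Qed.

Lemma supdist_meas_set_nonneg r p q : 0 < r -> on_sphere p -> on_sphere q ->
  0 <= supdist (meas_set u r) p q.
Proof.
  intros Hr Hp Hq. eapply Rle_trans; [apply (Rabs_pos (sdist p e3 - sdist q e3))|].
  apply (Rabs_sdist_sub_le_supdist _ (meas_set_sphere u r)); auto.
  apply half_gc_meas_set, e3_half_gc; auto.
Qed.

Lemma supdist_controls_dot r p q : 0 < r < PI -> on_sphere p -> on_sphere q ->
  (sin (r / 2)) ^ 2 * (2 - 2 * dot p q) <= 6 * (supdist (meas_set u r) p q) ^ 2.
Proof.
  intros Hr Hp Hq.
  set (d := vadd p (vscale (-1) q)).
  assert (Hdz : forall z, meas_set u r z -> Rabs (dot d z) <= supdist (meas_set u r) p q).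
  { intros z Hz. unfold d; dot_simpl.
    replace (dot p z + -1 * dot q z) with (dot p z - dot q z) by ring.
    apply (Rabs_dot_sub_le_supdist _ (meas_set_sphere u r)); auto. }
  replace (2 - 2 * dot p q) with (dot d d)
    by (unfold d; dot_simpl; rewrite Hp, Hq, (dot_comm q p); ring).
  apply anchor_bound; apply Hdz;
    [apply half_gc_meas_set, e3_half_gc | apply half_gc_meas_set, u_half_gc
    | apply anchor_meas_set]; lra.
Qed.

Lemma meas_set_injective r p q : 0 < r < PI -> on_sphere p -> on_sphere q ->
  (forall z, meas_set u r z -> sdist p z = sdist q z) -> p = q.
Proof.
  intros Hr Hp Hq Heq.
  assert (H0 : supdist (meas_set u r) p q <= 0).
  { apply real_Lub_Rbar_le; [lra|]. intros v [z [Hz ->]].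
    rewrite Heq, Rminus_diag, Rabs_R0 by auto; lra. }
  pose proof (supdist_meas_set_nonneg r p q ltac:(lra) Hp Hq).
  pose proof (supdist_controls_dot r p q Hr Hp Hq) as K.
  replace (supdist (meas_set u r) p q) with 0 in K by lra.
  assert (0 < sin (r / 2) ^ 2) by (apply pow_lt, sin_gt_0; lra).
  apply sphere_eq_of_dot_ge_1; auto. nra.
Qed.

Lemma meas_set_inverse_continuous r p eta : 0 < r < PI -> on_sphere p -> 0 < eta ->
  exists delta, 0 < delta /\ forall q, on_sphere q ->
    supdist (meas_set u r) p q < delta -> sdist p q < eta.
Proof.
  intros Hr Hp Heta.
  destruct (Rlt_or_le PI eta) as [Hbig|Hsmall].
  { exists 1. split; [lra|]. intros q _ _. pose proof (sdist_bound p q); lra. }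
  set (c := 1 - cos eta).
  assert (Hc : 0 < c <= 2).
  { pose proof (COS_bound eta).
    assert (cos eta < cos 0) by (apply cos_decreasing_1; lra).
    rewrite cos_0 in *; unfold c; lra. }
  assert (Hs : 0 < sin (r / 2) <= 1)
    by (pose proof (SIN_bound (r / 2)); split; [apply sin_gt_0|]; lra).
  exists (sin (r / 2) * c / 4). split; [nra|]. intros q Hq Hsup.
  pose proof (supdist_meas_set_nonneg r p q ltac:(lra) Hp Hq).
  pose proof (supdist_controls_dot r p q Hr Hp Hq).
  assert (Hpq : cos eta < dot p q).
  { assert (supdist (meas_set u r) p q ^ 2 < (sin (r / 2) * c / 4) ^ 2) by nra.
    assert (sin (r / 2) ^ 2 * (2 - 2 * dot p q) < sin (r / 2) ^ 2 * (2 * c)) by nra.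
    unfold c in *. nra. }
  unfold sdist. rewrite <- (acos_cos eta) by lra.
  pose proof (COS_bound eta); pose proof (dot_sphere_bound p q Hp Hq).
  apply acos_lt_acos; lra.
Qed.

Lemma meas_set_isometric r p q : 0 < r < 1 -> on_sphere p -> on_sphere q ->
  sdist p q < r -> supdist (meas_set u r) p q = sdist p q.
Proof.
  intros Hr Hp Hq Hpq. pose proof PI2_1.
  apply Rle_antisym; [apply (supdist_le_sdist _ (meas_set_sphere u r)); auto|].
  pose proof (dot_sphere_bound p q Hp Hq).
  destruct (Req_dec (dot p q) 1) as [E1|E1].
  { unfold sdist; rewrite E1, acos_1. apply supdist_meas_set_nonneg; auto; lra. }
  assert (Em1 : dot p q <> -1)
    by (intro E; unfold sdist in Hpq; rewrite E, acos_m1 in Hpq; lra).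
  destruct (great_circle_through p q Hp Hq ltac:(lra)) as [w [Hw [Hqw Ep]]].
  destruct (great_circle_meets_half_gc q w Hq Hw Hqw) as [th [Hth HY]].
  pose proof (sdist_bound p q). set (d := sdist p q) in *.
  destruct (angle_witness d r th) as [t [Htth [Ht [Hdt Hval]]]]; try lra.
  assert (Hz : meas_set u r (circ q w t)).
  { apply (meas_set_of_near u r _ (circ q w th)); auto using circ_sphere.
    rewrite sdist_circ; auto; lra. }
  assert (Hpz : sdist p (circ q w t) = Rabs (d - t)) by (rewrite Ep; apply sdist_circ; auto).
  assert (Hqz : sdist q (circ q w t) = Rabs (0 - t))
    by (rewrite <- (sdist_circ q w Hq Hw Hqw 0 t Ht), circ_0; auto).
  rewrite <- Hval at 1. rewrite <- Hpz, <- Hqz.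
  apply (Rabs_sdist_sub_le_supdist _ (meas_set_sphere u r)); auto.
Qed.

Lemma sdist_ge_of_orthogonal r v z : on_sphere v -> (forall x, half_gc u x -> dot v x = 0) ->
  meas_set u r z -> PI / 2 - r <= sdist v z.
Proof.
  intros Hv Horth [Hz Hnear]. apply Rnot_lt_le; intro H.
  destruct (Hnear (PI / 2 - r - sdist v z)) as [y [Hy [Hzy [x [Hx Hyx]]]]]; [lra|].
  pose proof (sdist_triangle v z y Hv Hz Hy).
  pose proof (sdist_triangle v y x Hv Hy (half_gc_sphere x Hx)).
  assert (sdist v x = PI / 2) by (unfold sdist; rewrite Horth, acos_0; auto). lra.
Qed.

Lemma supdist_poles_le r : 0 <= r -> supdist (meas_set u r) n (vscale (-1) n) <= 2 * r.
Proof.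
  intros Hr.
  assert (Horth : forall x, half_gc u x -> dot (vscale (-1) n) x = 0)
    by (intros x Hx; rewrite dot_vscale_l, dot_pole_half_gc; auto; ring).
  apply real_Lub_Rbar_le; [lra|]. intros v [z [Hz ->]].
  pose proof (sdist_ge_of_orthogonal r n z pole_sphere dot_pole_half_gc Hz).
  pose proof (sdist_ge_of_orthogonal r _ z (antipode_sphere n pole_sphere) Horth Hz).
  assert (E : sdist (vscale (-1) n) z = PI - sdist n z)
    by (unfold sdist; rewrite dot_vscale_l, <- acos_opp; f_equal; ring).
  rewrite E in *. pose proof (sdist_bound n z). apply Rabs_le; lra.
Qed.

Lemma FLIE_meas_set r : 0 < r < 1 -> FLIE (meas_set u r) r.
Proof.
  intros Hr. pose proof PI2_1.
  split; [|split; [|split]].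
  - intros p q Hp Hq. apply (meas_set_injective r); auto; lra.
  - intros p Hp eta Heta. exists eta. split; auto. intros q Hq Hpq.
    eapply Rle_lt_trans; [apply (supdist_le_sdist _ (meas_set_sphere u r))|]; eauto.
  - intros p Hp eta Heta. apply meas_set_inverse_continuous; auto; lra.
  - intros p q Hp Hq. apply meas_set_isometric; auto.
Qed.

Lemma meas_set_not_FLIE r eps : 0 <= r -> 2 * r < PI -> PI < eps -> ~ FLIE (meas_set u r) eps.
Proof.
  intros Hr Hr' Heps [_ [_ [_ Hiso]]].
  assert (Hd : sdist n (vscale (-1) n) = PI)
    by (unfold sdist; rewrite dot_vscale_r, pole_sphere, Rmult_1_r; apply acos_m1).
  pose proof (supdist_poles_le r Hr).
  rewrite Hiso in * by (auto using pole_sphere, antipode_sphere; lra). lra.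
Qed.

End HalfGreatCircle.

Theorem mainTheorem15 :
  forall u : pt, on_sphere u -> dot u e3 = 0 ->
  exists r0, 0 < r0 /\
    forall r, 0 < r < r0 ->
      FLIE (meas_set u r) r /\
      ~ (forall eps, 0 < eps -> FLIE (meas_set u r) eps).
Proof.
  intros [[u1 u2] u3] Hu He. unfold on_sphere, dot, e3 in Hu, He.
  replace u3 with 0 in * by lra.
  exists 1. split; [lra|]. intros r Hr. pose proof PI2_1. split.
  - apply FLIE_meas_set; auto; lra.
  - intros Hall. apply (meas_set_not_FLIE u1 u2 ltac:(lra) r (PI + 1)); try lra.
    apply Hall. pose proof PI_RGT_0; lra.
Qed.
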